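(* In the free second-type associative algebra $\mathcal{A}s_2\langle X\rangle$, for all elements $a,b,c,d,e$ the identity \[ abcde=abced-bcaed+bcade \] holds.
   Context: An associative algebra is called of the second type if it satisfies the identity $abc-acb-bac+bca+cab-cba=0$ for all $a,b,c$. $\mathcal{A}s_2\langle X\rangle$ denotes the free algebra of this variety on a countable generating set $X$, over a field of characteristic $0$. *)

From HB Require Import structures.
From mathcomp Require Import all_boot all_algebra.
Set Implicit Arguments. Unset Strict Implicit. Unset Printing Implicit Defensive.
Import GRing.Theory.
Local Open Scope ring_scope.

Record assocAlg (F : fieldType) := AssocAlg {
  carrier :> lmodType F;
  amul : carrier -> carrier -> carrier;
  amulA : forall x y z, amul x (amul y z) = amul (amul x y) z;
  amulDl : forall x y z, amul (x + y) z = amul x z + amul y z;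
  amulDr : forall x y z, amul x (y + z) = amul x y + amul x z;
  amulZl : forall (k : F) x y, amul (k *: x) y = k *: amul x y;
  amulZr : forall (k : F) x y, amul x (k *: y) = k *: amul x y
}.

Definition second_type (F : fieldType) (A : assocAlg F) : Prop :=
  forall a b c : A,
    amul (amul a b) c - amul (amul a c) b - amul (amul b a) c
    + amul (amul b c) a + amul (amul c a) b - amul (amul c b) a = 0.

Definition alg_hom (F : fieldType) (A B : assocAlg F) (h : A -> B) : Prop :=
  (forall x y : A, h (x + y) = h x + h y) /\
  (forall (k : F) (x : A), h (k *: x) = k *: h x) /\
  (forall x y : A, h (amul x y) = amul (h x) (h y)).

(* (A, i) is the free algebra of the variety of second-type associative
   algebras on the countable generating set X = nat, given by its
   universal property. *)
Definition is_free_As2 (F : fieldType) (A : assocAlg F) (i : nat -> A) : Prop :=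
  second_type A /\
  forall (B : assocAlg F) (g : nat -> B), second_type B ->
    exists h : A -> B, alg_hom h /\ (forall n, h (i n) = g n) /\
      forall h' : A -> B, alg_hom h' -> (forall n, h' (i n) = g n) ->
        forall x, h' x = h x.

(* Write [x, y] for xy - yx.  Comparing the defining identity s3 at (xw, y, z)
   with x s3(w, y, z) and s3(x, y, z) w gives x[y,z]w = [x,y][w,z] - [x,z][w,y];
   the same comparison one degree higher shows that [x,y]u[w,z] is symmetric in
   y and z.  Being also antisymmetric in x, y and in w, z, it is killed by 2.
   Feeding this back, exchanging y and z in [x,y][s,t]z doubles it, so it is
   killed by 3; hence so is x[y,z]uv.  As abc - bca = [a,b]c + b[a,c], this
   gives abc[d,e] = bca[d,e]. *)

From mathcomp Require Import all_boot all_algebra.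
Import GRing.Theory.
Local Open Scope ring_scope.
Set Implicit Arguments.
Unset Strict Implicit.

Local Notation "x ** y" := (amul x y) (at level 40, left associativity).

Section AssocAlgebra.
Variables (F : fieldType) (A : assocAlg F).

Definition acomm (x y : A) := x ** y - y ** x.

Lemma amul0l (y : A) : 0 ** y = 0.
Proof. by have := amulZl 0 0 y; rewrite !scale0r. Qed.

Lemma amul0r (x : A) : x ** 0 = 0.
Proof. by have := amulZr 0 x 0; rewrite !scale0r. Qed.

Lemma amulzl (x y : A) k : (x *~ k) ** y = (x ** y) *~ k.
Proof. by rewrite -!scaler_int amulZl. Qed.

Lemma amulzr (x y : A) k : x ** (y *~ k) = (x ** y) *~ k.
Proof. by rewrite -!scaler_int amulZr. Qed.

Lemma amul_suml I (r : seq I) (f : I -> A) (y : A) :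
  (\sum_(i <- r) f i) ** y = \sum_(i <- r) f i ** y.
Proof. exact: (big_morph (fun x => x ** y) (fun a b => amulDl a b y) (amul0l y)). Qed.

Lemma amul_sumr I (r : seq I) (f : I -> A) (x : A) :
  x ** (\sum_(i <- r) f i) = \sum_(i <- r) x ** f i.
Proof. exact: (big_morph (fun y => x ** y) (amulDr x) (amul0r x)). Qed.

Lemma natmul_eq0 n (x : A) : n%:R != 0 :> F -> x *+ n = 0 -> x = 0.
Proof.
by move=> n0; rewrite -scaler_nat => /eqP; rewrite scaler_eq0 (negbTE n0) => /eqP.
Qed.

End AssocAlgebra.

Inductive nc_term :=
  | NCVar of nat
  | NCZero
  | NCAdd of nc_term & nc_term
  | NCOpp of nc_term
  | NCMul of nc_term & nc_term.

(* The algebra need not be unital, so words are nonempty: (head, tail). *)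
Definition nc_word := (nat * seq nat)%type.
Definition nc_wcat (u v : nc_word) : nc_word := (u.1, u.2 ++ v.1 :: v.2).

Definition nc_poly := seq (int * nc_word).

Fixpoint nc_norm (t : nc_term) : nc_poly :=
  match t with
  | NCVar n => [:: (1, (n, [::]))]
  | NCZero => [::]
  | NCAdd s t => nc_norm s ++ nc_norm t
  | NCOpp t => [seq (- m.1, m.2) | m <- nc_norm t]
  | NCMul s t => [seq (m.1 * m'.1, nc_wcat m.2 m'.2) | m <- nc_norm s, m' <- nc_norm t]
  end.

Definition nc_coef (P : nc_poly) (w : nc_word) : int :=
  foldr (fun m c => if m.2 == w then m.1 + c else c) 0 P.

Definition nc_null (P : nc_poly) : bool :=
  all (fun w => nc_coef P w == 0) (undup (map snd P)).

Definition nc_check (s t : nc_term) := nc_null (nc_norm (NCAdd s (NCOpp t))).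

Section Normalization.
Variables (F : fieldType) (A : assocAlg F) (env : seq A).

Fixpoint nc_eval (t : nc_term) : A :=
  match t with
  | NCVar n => nth 0 env n
  | NCZero => 0
  | NCAdd s t => nc_eval s + nc_eval t
  | NCOpp t => - nc_eval t
  | NCMul s t => nc_eval s ** nc_eval t
  end.

Definition nc_mul_atom (x : A) (n : nat) := x ** nth 0 env n.

Definition nc_weval (w : nc_word) : A := foldl nc_mul_atom (nth 0 env w.1) w.2.

Definition nc_peval (P : nc_poly) : A := \sum_(m <- P) nc_weval m.2 *~ m.1.

Lemma foldl_mul_atom s (x y : A) :
  foldl nc_mul_atom (x ** y) s = x ** foldl nc_mul_atom y s.
Proof. by elim: s y => [|n s IHs] y //=; rewrite /nc_mul_atom -amulA IHs. Qed.

Lemma nc_weval_cat u v : nc_weval (nc_wcat u v) = nc_weval u ** nc_weval v.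
Proof. by rewrite /nc_weval foldl_cat /= -foldl_mul_atom. Qed.

Lemma nc_normE t : nc_peval (nc_norm t) = nc_eval t.
Proof.
rewrite /nc_peval; elim: t => [n||s IHs t IHt|t IHt|s IHs t IHt] /=.
- by rewrite big_seq1 mulr1z.
- by rewrite big_nil.
- by rewrite big_cat IHs IHt.
- by rewrite big_map -IHt -sumrN; apply: eq_bigr => m _; rewrite mulrNz.
- rewrite big_allpairs_dep -IHs -IHt amul_suml; apply: eq_bigr => m _.
  rewrite amul_sumr; apply: eq_bigr => m' _.
  by rewrite nc_weval_cat mulrzA amulzl amulzr mulrzAC.
Qed.

Lemma nc_peval_coef P S : uniq S -> {subset map snd P <= S} ->
  nc_peval P = \sum_(w <- S) nc_weval w *~ nc_coef P w.
Proof.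
move=> uS; elim: P => [|m P IHP] PS.
  by rewrite /nc_peval big_nil big1 // => w _; rewrite mulr0z.
have mS : m.2 \in S by apply: PS; rewrite inE eqxx.
rewrite /nc_peval big_cons -/(nc_peval P) IHP => [|w Pw]; last first.
  by apply: PS; rewrite inE Pw orbT.
have -> : \sum_(w <- S) nc_weval w *~ nc_coef (m :: P) w =
    \sum_(w <- S) (nc_weval w *~ (if m.2 == w then m.1 else 0)
                   + nc_weval w *~ nc_coef P w).
  by apply: eq_bigr => w _ /=; rewrite -mulrzDr; case: eqP; rewrite ?add0r.
rewrite big_split /=; congr (_ + _).
rewrite (bigD1_seq m.2) //= eqxx big1 ?addr0 // => w /negbTE.
by rewrite eq_sym => ->; rewrite mulr0z.
Qed.

Lemma nc_peval_eq0 P : nc_null P -> nc_peval P = 0.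
Proof.
move=> /allP P0; rewrite (@nc_peval_coef P (undup (map snd P))) ?undup_uniq //.
  by rewrite big1_seq // => w /andP[_ /P0 /eqP ->]; rewrite mulr0z.
by move=> w; rewrite mem_undup.
Qed.

Lemma nc_check_eq s t : nc_check s t -> nc_eval s = nc_eval t.
Proof. by move=> /nc_peval_eq0; rewrite nc_normE /= => /subr0_eq. Qed.

Lemma nc_use_eq_add (a b l r : A) : a = b -> l + (a - b) = r -> l = r.
Proof. by move=> -> <-; rewrite subrr addr0. Qed.

Lemma nc_use_eq_sub (a b l r : A) : a = b -> l - (a - b) = r -> l = r.
Proof. by move=> -> <-; rewrite subrr subr0. Qed.

End Normalization.

Ltac nc_index x l :=
  lazymatch l with
  | x :: _ => constr:(0%N)
  | _ :: ?l' => let n := nc_index x l' in constr:(n.+1)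
  end.

Ltac nc_add_atom x l :=
  match l with
  | _ => let _ := nc_index x l in l
  | _ => constr:(x :: l)
  end.

Ltac nc_atoms t l :=
  lazymatch t with
  | amul ?x ?y => let l' := nc_atoms x l in nc_atoms y l'
  | acomm ?x ?y => let l' := nc_atoms x l in nc_atoms y l'
  | @GRing.add _ ?x ?y => let l' := nc_atoms x l in nc_atoms y l'
  | @GRing.opp _ ?x => nc_atoms x l
  | @GRing.zero _ => l
  | _ => nc_add_atom t l
  end.

Ltac nc_reify env t :=
  lazymatch t with
  | amul ?x ?y =>
      let u := nc_reify env x in let v := nc_reify env y in constr:(NCMul u v)
  | acomm ?x ?y =>
      let u := nc_reify env x in let v := nc_reify env y in
      constr:(NCAdd (NCMul u v) (NCOpp (NCMul v u)))
  | @GRing.add _ ?x ?y =>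
      let u := nc_reify env x in let v := nc_reify env y in constr:(NCAdd u v)
  | @GRing.opp _ ?x => let u := nc_reify env x in constr:(NCOpp u)
  | @GRing.zero _ => constr:(NCZero)
  | _ => let n := nc_index t env in constr:(NCVar n)
  end.

Ltac nc_ring_eq :=
  cbv beta;
  lazymatch goal with
  | |- context [@amul ?F ?A _ _] =>
    lazymatch goal with
    | |- ?l = ?r =>
      let env := nc_atoms l (@nil A) in
      let env := nc_atoms r env in
      let tl := nc_reify env l in
      let tr := nc_reify env r in
      apply: (@nc_check_eq F A env tl tr); vm_compute; reflexivity
    end
  end.

Ltac nc_close :=
  lazymatch goal with
  | h : _ = _ |- _ =>
    (apply: (nc_use_eq_add h) + apply: (nc_use_eq_sub h)); clear h; nc_close
  | |- _ => nc_ring_eq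
  end.

(* Proves [l = r] in any associative algebra, using each premise [a = b] of
   the goal with coefficient +1 or -1 (all sign choices are tried). *)
Ltac nc_ring := intros; nc_close.

Section SecondType.
Variables (F : fieldType) (A : assocAlg F).
Hypothesis secA : second_type A.

Lemma mul_acomm_mul (x y z w : A) :
  x ** acomm y z ** w = acomm x y ** acomm w z - acomm x z ** acomm w y.
Proof.
move: (secA (x ** w) y z) (congr1 (amul x) (secA w y z)).
move: (congr1 (fun t => t ** w) (secA x y z)); nc_ring.
Qed.

Lemma acomm_mul_acomm_swap (x y u w z : A) :
  acomm x y ** u ** acomm w z = acomm x z ** u ** acomm w y.
Proof.
move: (mul_acomm_mul (x ** u) y z w) (congr1 (amul x) (mul_acomm_mul u y z w)).
nc_ring.
Qed.

Section SmallPrimesInvertible.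
Hypothesis two_neq0 : 2%:R != 0 :> F.

Lemma acomm_mul_acomm_eq0 (x y u w z : A) : acomm x y ** u ** acomm w z = 0.
Proof.
apply: (natmul_eq0 two_neq0); rewrite mulr2n.
move: (acomm_mul_acomm_swap x y u w z) (acomm_mul_acomm_swap z x u w y).
move: (acomm_mul_acomm_swap y z u w x); nc_ring.
Qed.

Lemma acomm_acomm_cycle (w x y z : A) :
  acomm w x ** acomm z y + acomm w y ** acomm x z + acomm w z ** acomm y x = 0.
Proof.
apply: (natmul_eq0 two_neq0); rewrite mulr2n.
move: (congr1 (amul w) (secA x y z)) (mul_acomm_mul w x y z).
move: (mul_acomm_mul w y z x) (mul_acomm_mul w z x y); nc_ring.
Qed.

Lemma mul_acomm_acomm (d a z b c : A) :
  d ** acomm a z ** acomm b c = acomm a d ** acomm b c ** z.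
Proof.
move: (acomm_acomm_cycle a b (d ** z) c).
move: (congr1 (fun t => t ** z) (acomm_acomm_cycle a b d c)).
move: (acomm_mul_acomm_eq0 a b d c z) (acomm_mul_acomm_eq0 a c d b z).
move: (acomm_mul_acomm_eq0 a d z b c); nc_ring.
Qed.

Lemma acomm_acomm_mul_swap (x y s t z : A) :
  acomm x z ** acomm s t ** y = (acomm x y ** acomm s t ** z) *+ 2.
Proof.
rewrite mulr2n; move: (mul_acomm_acomm x y z s t) (mul_acomm_mul x y z (acomm s t)).
move: (acomm_mul_acomm_eq0 x y z s t) (acomm_mul_acomm_eq0 x z y s t); nc_ring.
Qed.

Hypothesis three_neq0 : 3%:R != 0 :> F.

Lemma acomm_acomm_mul_eq0 (x y s t z : A) : acomm x y ** acomm s t ** z = 0.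
Proof.
apply: (natmul_eq0 three_neq0); rewrite mulrS mulr2n.
move: (acomm_acomm_mul_swap x y s t z) (acomm_acomm_mul_swap x y s t z).
move: (acomm_acomm_mul_swap x z s t y); rewrite !mulr2n; nc_ring.
Qed.

Lemma mul_acomm_mul_mul_eq0 (a b c d e : A) : a ** acomm b c ** d ** e = 0.
Proof.
move: (congr1 (fun t => t ** e) (mul_acomm_mul a b c d)).
move: (acomm_acomm_mul_eq0 a b d c e) (acomm_acomm_mul_eq0 a c d b e); nc_ring.
Qed.

Lemma mul3_acomm_cycle (a b c d e : A) :
  a ** b ** c ** acomm d e = b ** c ** a ** acomm d e.
Proof.
move: (acomm_mul_acomm_eq0 a b c d e) (mul_acomm_mul_mul_eq0 b a c d e).
move: (mul_acomm_mul_mul_eq0 b a c e d); nc_ring.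
Qed.

End SmallPrimesInvertible.
End SecondType.

Theorem mainTheorem2 (F : fieldType) (charF0 : [pchar F] =i pred0)
  (A : assocAlg F) (i : nat -> A) (Hfree : is_free_As2 i) :
  forall a b c d e : A,
    amul (amul (amul (amul a b) c) d) e =
    amul (amul (amul (amul a b) c) e) d
    - amul (amul (amul (amul b c) a) e) d
    + amul (amul (amul (amul b c) a) d) e.
Proof.
move=> a b c d e; have [secA _] := Hfree.
have neq0 n : n != 0%N -> n%:R != 0 :> F by move/pcharf0P: charF0 => ->.
move: (mul3_acomm_cycle secA (neq0 2%N isT) (neq0 3%N isT) a b c d e); nc_ring.
Qed.
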